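(* Let $G$ and $H$ be topological groups satisfying one of the following two conditions: (i) the torsion part of $G$ is dense in $G$ and the completion $\hat{H}$ is torsion-free; (ii) there exists $n\in\mathbb{N}$ such that $\hat{G}^{(n)}=\hat{G}$ and $H^{(n)}=\{e\}$. If two $G^{\star\star}$-regular spaces $X$ and $Y$ are $(G\times H)$-equivalent, then they are both $G$-equivalent and $H$-equivalent.
   Context: All spaces are Tychonoff and non-empty; all topological groups are Hausdorff; $e$ denotes the identity. $\hat{K}$ denotes the completion of a topological group $K$ with respect to the two-sided uniformity. The torsion part of a group $K$ is the set of $g\in K$ with $g^m=e$ for some $m\ge1$; $K$ is torsion-free if its torsion part is $\{e\}$. For $n\in\mathbb{N}$, $K^{(n)}=\{g^n:g\in K\}$. $C_p(X,K)$ is the group of continuous maps $X\to K$ with pointwise operations and topology of pointwise convergence; $X,Y$ are $K$-equivalent if $C_p(X,K)\cong C_p(Y,K)$ as topological groups. $X$ is $G^{\star\star}$-regular if for every closed $F\subseteq X$, every $x\in X\setminus F$ and every $g\in G$ there is $f\in C_p(X,G)$ with $f(x)=g$ and $f(F)\subseteq\{e\}$. *)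

From HB Require Import structures.
From mathcomp Require Import all_boot all_order all_algebra.
From mathcomp Require Import all_classical all_reals all_analysis.
From mathcomp Require Import Rstruct Rstruct_topology.
From Stdlib Require Import Rdefinitions.

Set Implicit Arguments.
Unset Strict Implicit.
Unset Printing Implicit Defensive.

Local Open Scope classical_set_scope.

Definition tychonoff_space (X : topologicalType) : Prop :=
  accessible_space X /\
  forall (F : set X) (x : X), closed F -> ~ F x ->
    exists f : X -> Rdefinitions.R,
      continuous f /\ f x = 0%R /\ (forall z, F z -> f z = 1%R).

Record tgData := TGData {
  tg_car :> topologicalType;
  tg_mul : tg_car -> tg_car -> tg_car;
  tg_inv : tg_car -> tg_car;
  tg_one : tg_car }.

Arguments tg_mul {_}.
Arguments tg_inv {_}.
Arguments tg_one {_}.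

Definition topological_group (K : tgData) : Prop :=
  [/\ (forall a b c : K, tg_mul a (tg_mul b c) = tg_mul (tg_mul a b) c),
      (forall a : K, tg_mul tg_one a = a /\ tg_mul a tg_one = a),
      (forall a : K, tg_mul (tg_inv a) a = tg_one /\ tg_mul a (tg_inv a) = tg_one),
      continuous (fun p : K * K => tg_mul p.1 p.2) /\ continuous (@tg_inv K) &
      hausdorff_space K].

Definition tg_pow (K : tgData) (g : K) (m : nat) : K := iter m (tg_mul g) tg_one.

Definition torsion_part (K : tgData) : set K :=
  [set g | exists m : nat, (0 < m)%N /\ tg_pow g m = tg_one].

Definition torsion_free (K : tgData) : Prop := @torsion_part K = [set tg_one].

Definition nth_powers (K : tgData) (n : nat) : set K := [set x | exists g : K, tg_pow g n = x].

Definition prod_tg (G H : tgData) : tgData :=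
  @TGData (tg_car G * tg_car H)%type
    (fun a b => (tg_mul a.1 b.1, tg_mul a.2 b.2))
    (fun a => (tg_inv a.1, tg_inv a.2))
    (tg_one, tg_one).

Definition two_sided_ent (K : tgData) (U : set K) : set (K * K) :=
  [set p | U (tg_mul (tg_inv p.1) p.2) /\ U (tg_mul p.2 (tg_inv p.1))].

Definition two_sided_cauchy (K : tgData) (F : set_system K) : Prop :=
  forall U : set K, nbhs (@tg_one K) U ->
    exists2 A, F A & A `*` A `<=` two_sided_ent U.

Definition raikov_complete (K : tgData) : Prop :=
  forall F : set_system K, ProperFilter F -> two_sided_cauchy F ->
    exists x : K, nbhs x `<=` F.

Definition is_completion (K Kc : tgData) (iota : K -> Kc) : Prop :=
  [/\ topological_group Kc /\ raikov_complete Kc,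
      (forall a b : K, iota (tg_mul a b) = tg_mul (iota a) (iota b)),
      injective iota /\ continuous iota,
      (forall U : set K, open U -> exists2 V : set Kc, open V & iota @^-1` V = U) &
      dense (range iota)].

Definition Cp (X : topologicalType) (K : tgData) : topologicalType :=
  set_type [set f : {ptws X -> K} | continuous (f : X -> K)].

Definition Cp_val (X : topologicalType) (K : tgData) (f : Cp X K) : X -> K :=
  (projT1 f : {ptws X -> K}).

Definition Cp_hom (X Y : topologicalType) (K : tgData) (Phi : Cp X K -> Cp Y K) : Prop :=
  forall f g h : Cp X K,
    (forall x, Cp_val h x = tg_mul (Cp_val f x) (Cp_val g x)) ->
    forall y, Cp_val (Phi h) y = tg_mul (Cp_val (Phi f) y) (Cp_val (Phi g) y).

Definition K_equivalent (K : tgData) (X Y : topologicalType) : Prop :=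
  exists (Phi : Cp X K -> Cp Y K) (Psi : Cp Y K -> Cp X K),
    [/\ cancel Phi Psi, cancel Psi Phi, Cp_hom Phi,
        continuous Phi & continuous Psi].

Definition Gss_regular (G : tgData) (X : topologicalType) : Prop :=
  forall (F : set X) (x : X) (g : G), closed F -> ~ F x ->
    exists f : X -> G, [/\ continuous f, f x = g & forall z, F z -> f z = tg_one].

From HB Require Import structures.
From mathcomp Require Import all_boot all_order all_algebra.
From mathcomp Require Import all_classical all_reals all_analysis.

Set Implicit Arguments.
Unset Strict Implicit.
Unset Printing Implicit Defensive.

Local Open Scope classical_set_scope.

(* Write K = G x H. It suffices that an isomorphism C_p(X,K) -> C_p(Y,K) maps the
   G-valued maps, a copy of C_p(X,G), onto the G-valued maps: it then restricts to
   C_p(X,G) ~ C_p(Y,G), and on the quotients it induces C_p(X,H) ~ C_p(Y,H).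
   For a point y, c |-> (Phi c)(y).2 is a continuous homomorphism phi into H, so
   it suffices that phi kills the G-valued maps.  By G**-regularity, any finitely
   many values of a G-valued map can be prescribed.  Under (ii) the n-th powers
   are dense in G (they are all of the completion), so n-th powers of G-valued
   maps are dense among G-valued maps, and phi kills them since H^(n) = e.
   Under (i) a G-valued map is approximated at finitely many points by a possibly
   discontinuous torsion map tau with tau^m = e; phi maps the trace of the
   neighbourhood filter of tau to a two-sided Cauchy filter whose limit in the
   completion of H has order dividing m, hence is e. *)

(* [topological_group] without the Hausdorff axiom, which none of the lemmas
   below needs. *)
Definition topgroup_axioms (K : tgData) : Prop :=
  [/\ (forall a b c : K, tg_mul a (tg_mul b c) = tg_mul (tg_mul a b) c),
      (forall a : K, tg_mul tg_one a = a /\ tg_mul a tg_one = a),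
      (forall a : K, tg_mul (tg_inv a) a = tg_one /\ tg_mul a (tg_inv a) = tg_one) &
      continuous (fun p : K * K => tg_mul p.1 p.2) /\ continuous (@tg_inv K)].

Lemma topological_group_axioms K : topological_group K -> topgroup_axioms K.
Proof. by case=> *; split. Qed.

Definition tg_morphism (K1 K2 : tgData) (f : K1 -> K2) : Prop :=
  forall a b, f (tg_mul a b) = tg_mul (f a) (f b).

Lemma tg_morphism_inverse (K1 K2 : tgData) (f : K1 -> K2) (g : K2 -> K1) :
  cancel f g -> cancel g f -> tg_morphism f -> tg_morphism g.
Proof. by move=> fK gK hf a b; rewrite -{1}(gK a) -{1}(gK b) -hf fK. Qed.

Lemma cvg_fst_comp (A B : topologicalType) T (F : set_system T) (u : T -> A * B) (p : A * B) :
  u @ F --> p -> (fun z => (u z).1) @ F --> p.1.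
Proof. by move=> hu; apply: cvg_comp hu _; case: p => a b; exact: cvg_fst. Qed.

Lemma cvg_snd_comp (A B : topologicalType) T (F : set_system T) (u : T -> A * B) (p : A * B) :
  u @ F --> p -> (fun z => (u z).2) @ F --> p.2.
Proof. by move=> hu; apply: cvg_comp hu _; case: p => a b; exact: cvg_snd. Qed.

Section TopGroup.
Variable K : tgData.
Hypothesis hK : topgroup_axioms K.

Local Notation "a * b" := (tg_mul a b).
Local Notation "a ^-1" := (tg_inv a).
Local Notation e := (@tg_one K).

Lemma tg_mulA (a b c : K) : a * (b * c) = (a * b) * c.
Proof. by case: hK => h *; apply: h. Qed.
Lemma tg_mul1g (a : K) : e * a = a.
Proof. by case: hK => _ h *; case: (h a). Qed.
Lemma tg_mulg1 (a : K) : a * e = a.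
Proof. by case: hK => _ h *; case: (h a). Qed.
Lemma tg_mulVg (a : K) : a^-1 * a = e.
Proof. by case: hK => _ _ h *; case: (h a). Qed.
Lemma tg_mulgV (a : K) : a * a^-1 = e.
Proof. by case: hK => _ _ h *; case: (h a). Qed.

Lemma tg_mulgI (a b c : K) : a * b = a * c -> b = c.
Proof.
by move=> h; rewrite -(tg_mul1g b) -(tg_mul1g c) -(tg_mulVg a) -!tg_mulA h.
Qed.

Lemma tg_idem_one (a : K) : a * a = a -> a = e.
Proof. by move=> h; apply: (@tg_mulgI a); rewrite h tg_mulg1. Qed.

Lemma tg_inv_uniq (a b : K) : a * b = e -> b = a^-1.
Proof. by move=> h; apply: (@tg_mulgI a); rewrite h tg_mulgV. Qed.

Lemma tg_powD (g : K) m k : tg_pow g (m + k) = tg_pow g m * tg_pow g k.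
Proof.
elim: m => [|m IH]; first by rewrite add0n tg_mul1g.
by rewrite addSn /= IH tg_mulA.
Qed.

Lemma tg_pow1 m : tg_pow e m = e.
Proof. by elim: m => //= m ->; rewrite tg_mul1g. Qed.

Lemma tg_powM (g : K) m k : tg_pow g (m * k) = tg_pow (tg_pow g m) k.
Proof. by elim: k => [|k IH]; rewrite ?muln0 // mulnS tg_powD IH. Qed.

Lemma tg_cvgM T (F : set_system T) (u v : T -> K) (a b : K) : Filter F ->
  u @ F --> a -> v @ F --> b -> (fun z => u z * v z) @ F --> a * b.
Proof.
move=> FF hu hv; have [_ _ _ [cM _]] := hK.
exact: (continuous_cvg FF (cM (a, b)) (cvg_pair hu hv)).
Qed.

Lemma tg_cvgV T (F : set_system T) (u : T -> K) (a : K) : Filter F ->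
  u @ F --> a -> (fun z => (u z)^-1) @ F --> a^-1.
Proof.
by move=> FF hu; have [_ _ _ [_ cV]] := hK; exact: (continuous_cvg FF (cV a) hu).
Qed.

Lemma tg_cvgX T (F : set_system T) (u : T -> K) (a : K) m : Filter F ->
  u @ F --> a -> (fun z => tg_pow (u z) m) @ F --> tg_pow a m.
Proof.
move=> FF hu; elim: m => [|m IH]; first exact: cvg_cst.
exact: tg_cvgM.
Qed.

Lemma tg_continuousM (T : topologicalType) (f g : T -> K) :
  continuous f -> continuous g -> continuous (fun z => f z * g z).
Proof. by move=> cf cg z; apply: tg_cvgM; [exact: cf | exact: cg]. Qed.

Lemma tg_continuousV (T : topologicalType) (f : T -> K) :
  continuous f -> continuous (fun z => (f z)^-1).
Proof. by move=> cf z; apply: tg_cvgV; exact: cf. Qed.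

Lemma tg_nbhs_two_sided (S : set K) (k : K) : nbhs e S ->
  exists2 W, nbhs k W & forall q q', W q -> W q' -> S (q^-1 * q') /\ S (q' * q^-1).
Proof.
move=> eS; have kk : id @ nbhs (k, k) --> (k, k) := cvg_id.
have [h1 h2] := (cvg_fst_comp kk, cvg_snd_comp kk).
have hk : (fun p : K * K => (p.1^-1 * p.2, p.2 * p.1^-1)) @ nbhs (k, k) --> (e, e).
  apply: cvg_pair.
  - by rewrite -(tg_mulVg k); apply: tg_cvgM => //; exact: tg_cvgV.
  - by rewrite -(tg_mulgV k); apply: tg_cvgM => //; exact: tg_cvgV.
have [[P1 P2] [kP1 kP2] P12] : nbhs (k, k)
    [set p : K * K | S (p.1^-1 * p.2) /\ S (p.2 * p.1^-1)].
  by apply: (hk (S `*` S)); exists (S, S).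
exists (P1 `&` P2); first exact: filterI.
by move=> q q' [q1 _] [_ q2]; exact: (P12 (q, q')).
Qed.

End TopGroup.

Section TopGroupMorphism.
Variables (K1 K2 : tgData) (hK1 : topgroup_axioms K1) (hK2 : topgroup_axioms K2).
Variables (f : K1 -> K2) (hf : tg_morphism f).

Lemma tg_morph1 : f tg_one = tg_one.
Proof. by apply: (tg_idem_one hK2); rewrite -hf (tg_mul1g hK1). Qed.

Lemma tg_morphV g : f (tg_inv g) = tg_inv (f g).
Proof. by apply: (tg_inv_uniq hK2); rewrite -hf (tg_mulgV hK1) tg_morph1. Qed.

Lemma tg_morphX g m : f (tg_pow g m) = tg_pow (f g) m.
Proof. by elim: m => [|m IH] /=; rewrite ?tg_morph1 // hf IH. Qed.

Lemma two_sided_cauchy_morphism (F : set_system K1) :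
  {for tg_one, continuous f} -> Filter F -> two_sided_cauchy F -> two_sided_cauchy (f @ F).
Proof.
move=> cf FF cauchyF U eU.
have [|A FA AU] := cauchyF (f @^-1` U); first by apply: cf; rewrite tg_morph1.
exists (f @` A).
  have AfA : A `<=` f @^-1` (f @` A) by move=> a Aa; exists a.
  exact: filterS AfA FA.
move=> [_ _] [/= [a Aa <-] [b Ab <-]]; have [Uab Uba] := AU (a, b) (conj Aa Ab).
by rewrite /two_sided_ent /= -!tg_morphV -!hf.
Qed.

End TopGroupMorphism.

Lemma torsion_free_completion_cvg_one (H Hc : tgData) (iH : H -> Hc)
    (F : set_system H) (m : nat) :
  topgroup_axioms H -> is_completion iH -> torsion_free Hc ->
  ProperFilter F -> two_sided_cauchy F -> (0 < m)%N ->
  (fun h => tg_pow h m) @ F --> tg_one -> F --> tg_one.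
Proof.
move=> hH [[hHc complete] morph [_ ciH] emb _] tf PF cauchyF m0 Fm.
have sepHc : hausdorff_space Hc by case: hHc.
have {}hHc := topological_group_axioms hHc.
have [|z Fz] := complete _ (fmap_proper_filter iH PF).
  by apply: (two_sided_cauchy_morphism hH hHc morph) => //; exact: ciH.
have zm : tg_pow z m = tg_one.
  have PFm := fmap_proper_filter (fun h => tg_pow (iH h) m) PF.
  have Fmz : (fun h => tg_pow (iH h) m) @ F --> tg_pow z m by apply: tg_cvgX.
  have Fm1 : (fun h => tg_pow (iH h) m) @ F --> tg_one.
    rewrite -(tg_morph1 hH hHc morph).
    under eq_fun do rewrite -(tg_morphX hH hHc morph).
    exact: (continuous_cvg _ (@ciH tg_one) Fm).
  exact: (cvg_unique sepHc Fmz Fm1).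
have z1 : z = tg_one.
  have : torsion_part z by exists m.
  by rewrite tf.
move=> B; rewrite nbhsE; case=> O [oO Oe] OB; apply: filterS OB _.
have [V oV VO] := emb O oO.
have Ve : V tg_one.
  by rewrite -(tg_morph1 hH hHc morph); change ((iH @^-1` V) tg_one); rewrite VO.
by rewrite -VO; apply: Fz; rewrite z1; exact: open_nbhs_nbhs.
Qed.

Section ProductGroup.
Variables (G H : tgData) (hG : topgroup_axioms G) (hH : topgroup_axioms H).
Local Notation K := (prod_tg G H).

Lemma prod_topgroup : topgroup_axioms K.
Proof.
split.
- by move=> a b c /=; rewrite !tg_mulA.
- by move=> [a b] /=; rewrite !tg_mul1g // !tg_mulg1.
- by move=> a /=; rewrite !tg_mulVg // !tg_mulgV.
split=> p.
- have hp : id @ nbhs p --> p := cvg_id.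
  have [h1 h2] := (cvg_fst_comp hp, cvg_snd_comp hp).
  apply: (cvg_pair (f := fun q : K * K => tg_mul q.1.1 q.2.1)
                   (g := fun q : K * K => tg_mul q.1.2 q.2.2)).
  + by apply: tg_cvgM => //; [exact: cvg_fst_comp h1 | exact: cvg_fst_comp h2].
  + by apply: tg_cvgM => //; [exact: cvg_snd_comp h1 | exact: cvg_snd_comp h2].
- have hp : id @ nbhs p --> p := cvg_id.
  apply: (cvg_pair (f := fun q : K => tg_inv q.1) (g := fun q : K => tg_inv q.2)).
  + exact: tg_cvgV (cvg_fst_comp hp).
  + exact: tg_cvgV (cvg_snd_comp hp).
Qed.

Lemma prod_tg_pow (k : K) m : tg_pow k m = (tg_pow k.1 m, tg_pow k.2 m).
Proof. by elim: m => //= m ->. Qed.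

End ProductGroup.

Section Pointwise.
Variables (X : eqType) (K : topologicalType).

Lemma ptws_proj_cvg T (F : set_system T) (u : T -> {ptws X -> K}) (f : {ptws X -> K}) x :
  Filter F -> u @ F --> f -> (fun t => u t x) @ F --> f x.
Proof.
by move=> FF hu; exact: (continuous_cvg FF (@proj_continuous X (fun _ => K) x f) hu).
Qed.

Lemma ptws_cvgP (F : set_system {ptws X -> K}) (f : {ptws X -> K}) : Filter F ->
  F --> f <-> forall x, (fun g : {ptws X -> K} => g x) @ F --> f x.
Proof.
move=> FF; split=> [hF x|h]; first exact: (@ptws_proj_cvg _ F id f x FF hF).
apply/cvg_sup => x A /= [_ [[B Bop <-] Bfs sBfA]].
rewrite nbhs_filterE; apply: filterS sBfA _; apply: (h x).
by apply: open_nbhs_nbhs; split.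
Qed.

Lemma ptws_nbhs_finite (f : {ptws X -> K}) (xs : seq X) (W : X -> set K) :
  (forall x, x \in xs -> nbhs (f x) (W x)) ->
  nbhs f [set g : {ptws X -> K} | forall x, x \in xs -> W x (g x)].
Proof.
elim: xs => [|x xs IH] hW.
  by apply: filterS (@filterT _ _ (nbhs_filter f)) => g _ z.
have hxs : nbhs f [set g : {ptws X -> K} | forall z, z \in xs -> W z (g z)].
  by apply: IH => z zxs; apply: hW; rewrite inE zxs orbT.
have hx : nbhs f ((fun g : {ptws X -> K} => g x) @^-1` W x).
  by apply: (@proj_continuous X (fun _ => K) x f); apply: hW; rewrite inE eqxx.
apply: filterS (filterI hxs hx) => g [gxs gx] z.
by rewrite inE => /orP[/eqP -> //|]; exact: gxs.
Qed.

Definition ptws_basic (f : X -> K) (N : set (X -> K)) : Prop :=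
  exists (xs : seq X) (W : X -> set K), (forall x, open (W x) /\ W x (f x)) /\
    forall g, (forall x, x \in xs -> W x (g x)) -> N g.

Lemma ptws_basic_filter (f : X -> K) : Filter (ptws_basic f).
Proof.
split.
- by exists [::], (fun=> setT); split=> // x; split=> //; exact: openT.
- move=> N1 N2 [xs1 [W1 [oW1 hN1]]] [xs2 [W2 [oW2 hN2]]].
  exists (xs1 ++ xs2), (fun x => W1 x `&` W2 x); split.
    move=> x; case: (oW1 x) (oW2 x) => op1 fx1 [op2 fx2].
    by split; [exact: openI | split].
  move=> g hg; split; [apply: hN1 | apply: hN2] => x xs;
    by case: (hg x); rewrite // mem_cat xs ?orbT.
- by move=> N1 N2 N12 [xs [W [oW hN]]]; exists xs, W; split=> // g /hN /N12.
Qed.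

Lemma ptws_nbhsE (f : {ptws X -> K}) : nbhs f = ptws_basic f.
Proof.
rewrite eqEsubset; split=> N; last first.
  move=> [xs [W [oW hN]]].
  have : nbhs f [set g : {ptws X -> K} | forall x, x \in xs -> W x (g x)].
    by apply: ptws_nbhs_finite => x _; case: (oW x) => ? ?; exact: open_nbhs_nbhs.
  by apply: filterS.
have FF := ptws_basic_filter f.
suff : ptws_basic f `=>` nbhs f by apply.
apply/(@ptws_cvgP (ptws_basic f) f FF) => x V /=; rewrite nbhsE => -[U [oU Ufx] UV].
exists [:: x], (fun y => if y == x then U else setT); split.
  by move=> y; case: eqP => [->|_]; [split | split=> //; exact: openT].
by move=> g /(_ x); rewrite mem_seq1 eqxx => /(_ isT) /UV.
Qed.

End Pointwise.

Section FunctionSpace.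
Variables (X : topologicalType) (K : tgData).

Lemma Cp_ext (c d : Cp X K) : (forall x, Cp_val c x = Cp_val d x) -> c = d.
Proof. by move=> h; apply: val_inj; apply: funext. Qed.

Lemma Cp_continuous (c : Cp X K) : continuous (Cp_val c).
Proof. by case: c => f hf; exact: set_mem hf. Qed.

Definition mkCp (f : X -> K) (hf : continuous f) : Cp X K :=
  @exist {ptws X -> K} _ (f : {ptws X -> K}) (mem_set hf).

Lemma mkCpE f hf x : Cp_val (@mkCp f hf) x = f x.
Proof. by []. Qed.

(* [f] need not be continuous: this is the trace on C_p(X,K) of its
   neighbourhood filter in K^X. *)
Definition Cp_trace (f : {ptws X -> K}) : set_system (Cp X K) :=
  [set N | exists2 M, nbhs f M & forall c, M (\val c) -> N c].

Lemma Cp_trace_filter f : Filter (Cp_trace f).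
Proof.
split.
- by exists setT => //; exact: filterT.
- move=> N1 N2 [M1 fM1 hM1] [M2 fM2 hM2]; exists (M1 `&` M2); first exact: filterI.
  by move=> c [/hM1 ? /hM2 ?].
- by move=> N1 N2 N12 [M fM hM]; exists M => // c /hM /N12.
Qed.

Lemma Cp_nbhsE (a : Cp X K) : nbhs a = Cp_trace (\val a).
Proof.
rewrite eqEsubset; split=> N.
  by move=> [_ [[B oB <-] Ba BN]]; exists B => [|c Bc]; [exact: open_nbhs_nbhs | exact: BN].
move=> [M aM MN]; apply: filterS MN _.
exact: (@initial_continuous _ {ptws X -> K} set_val a).
Qed.

Lemma Cp_nbhs_basic (a : Cp X K) (N : set (Cp X K)) : nbhs a N ->
  exists (xs : seq X) (W : X -> set K), (forall x, open (W x) /\ W x (Cp_val a x)) /\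
    forall c, (forall x, x \in xs -> W x (Cp_val c x)) -> N c.
Proof.
rewrite Cp_nbhsE => -[M]; rewrite ptws_nbhsE => -[xs [W [oW hM]]] MN.
by exists xs, W; split=> // c hc; apply: MN; apply: hM.
Qed.

Lemma Cp_cvgP T (F : set_system T) (u : T -> Cp X K) (a : Cp X K) : Filter F ->
  u @ F --> a <-> forall x, (fun t => Cp_val (u t) x) @ F --> Cp_val a x.
Proof.
move=> FF; split=> [hu x|h].
  apply: (@ptws_proj_cvg _ _ _ F (fun t => \val (u t)) (\val a) x FF).
  apply: (continuous_cvg FF _ hu).
  exact: (@initial_continuous _ {ptws X -> K} set_val a).
have hval : (fun t => \val (u t)) @ F --> \val a.
  apply/(@ptws_cvgP _ _ ((fun t => \val (u t)) @ F) (\val a) (fmap_filter _ FF)) => x.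
  exact: h.
by rewrite Cp_nbhsE => N [M aM MN]; apply: filterS MN _; exact: hval.
Qed.

Lemma Cp_trace_eval (f : {ptws X -> K}) x :
  (fun c : Cp X K => Cp_val c x) @ Cp_trace f --> f x.
Proof.
move=> V fV; exists ((fun g : {ptws X -> K} => g x) @^-1` V) => // .
exact: (@proj_continuous X (fun _ => K) x f).
Qed.

End FunctionSpace.
Arguments Cp_continuous {X K} c.

Section FunctionSpaceGroup.
Variables (K : tgData) (hK : topgroup_axioms K).

Section OnSpace.
Variable X : topologicalType.

Definition Cp_mul (c d : Cp X K) : Cp X K :=
  mkCp (tg_continuousM hK (Cp_continuous c) (Cp_continuous d)).
Definition Cp_inv (c : Cp X K) : Cp X K := mkCp (tg_continuousV hK (Cp_continuous c)).
Definition Cp_one : Cp X K := mkCp (@cst_continuous X K tg_one).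

Definition Cp_tg : tgData := TGData Cp_mul Cp_inv Cp_one.

Lemma Cp_topgroup : topgroup_axioms Cp_tg.
Proof.
split.
- by move=> a b c; apply: Cp_ext => x; rewrite !mkCpE tg_mulA.
- by move=> a; split; apply: Cp_ext => x; rewrite !mkCpE ?tg_mul1g ?tg_mulg1.
- by move=> a; split; apply: Cp_ext => x; rewrite !mkCpE ?tg_mulVg ?tg_mulgV.
split=> p.
- apply/(@Cp_cvgP X K _ _ (fun q : Cp_tg * Cp_tg => Cp_mul q.1 q.2) _ (nbhs_filter p)) => x.
  have hp : id @ nbhs p --> p := cvg_id.
  apply: tg_cvgM => //.
  + exact: (proj1 (@Cp_cvgP X K _ _ _ _ (nbhs_filter p)) (cvg_fst_comp hp) x).
  + exact: (proj1 (@Cp_cvgP X K _ _ _ _ (nbhs_filter p)) (cvg_snd_comp hp) x).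
- apply/(@Cp_cvgP X K _ _ Cp_inv _ (nbhs_filter p)) => x.
  by apply: tg_cvgV => //; exact: (proj1 (@Cp_cvgP X K _ _ _ _ (nbhs_filter p)) cvg_id x).
Qed.

Lemma Cp_trace_cauchy (f : {ptws X -> K}) :
  two_sided_cauchy (Cp_trace f : set_system Cp_tg).
Proof.
move=> U /Cp_nbhs_basic [xs [W [oW hU]]].
have /choice[V hV] : forall x, exists V, nbhs (f x) V /\ forall q q', V q -> V q' ->
    W x (tg_mul (tg_inv q) q') /\ W x (tg_mul q' (tg_inv q)).
  move=> x; have [oWx Wx1] := oW x.
  have [V fV VW] := tg_nbhs_two_sided hK (f x) (open_nbhs_nbhs (conj oWx Wx1)).
  by exists V.
exists [set c : Cp X K | forall x, x \in xs -> V x (Cp_val c x)].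
  exists [set g : {ptws X -> K} | forall x, x \in xs -> V x (g x)] => //.
  by apply: ptws_nbhs_finite => x _; case: (hV x).
move=> [c d] [/= Vc Vd]; split; apply: hU => x xxs;
  by have [? ?] := (hV x).2 _ _ (Vc x xxs) (Vd x xxs).
Qed.

Lemma Cp_powE (c : Cp_tg) m x : Cp_val (tg_pow c m) x = tg_pow (Cp_val c x) m.
Proof. by elim: m => //= m IH; rewrite mkCpE IH. Qed.

End OnSpace.

Lemma Cp_homP (X Y : topologicalType) (Phi : Cp X K -> Cp Y K) :
  Cp_hom Phi <-> tg_morphism (Phi : Cp_tg X -> Cp_tg Y).
Proof.
split=> [hPhi c d | mPhi f g h fgh y]; first by apply: Cp_ext => y; exact: hPhi.
have -> : h = tg_mul (f : Cp_tg X) g by apply: Cp_ext => x; rewrite fgh.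
by rewrite mPhi.
Qed.

End FunctionSpaceGroup.

Lemma Gss_regular_interpolate (G : tgData) (hG : topgroup_axioms G) (X : topologicalType) :
  accessible_space X -> Gss_regular G X ->
  forall (xs : seq X) (v : X -> G), exists b : Cp X G, forall x, x \in xs -> Cp_val b x = v x.
Proof.
move=> T1X regX; elim=> [|x xs IH] v.
  by exists (mkCp (@cst_continuous X G tg_one)).
have [b hb] := IH v.
have [xxs|xxs] := boolP (x \in xs).
  by exists b => z; rewrite inE => /orP[/eqP ->|]; exact: hb.
have cl : closed [set` xs] by apply: (proj1 accessible_finite_set_closed T1X); exact: finite_seq.
have [f [cf fx f1]] := regX _ x (tg_mul (v x) (tg_inv (Cp_val b x))) cl (negP xxs).
exists (mkCp (tg_continuousM hG cf (Cp_continuous b))) => z; rewrite mkCpE inE.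
case/orP=> [/eqP ->|zxs]; first by rewrite fx -tg_mulA // tg_mulVg // tg_mulg1.
by rewrite f1 // tg_mul1g // hb.
Qed.

Lemma completion_dense_powers (G Gc : tgData) (iG : G -> Gc) n :
  topgroup_axioms G -> is_completion iG -> @nth_powers Gc n = setT ->
  dense (@nth_powers G n).
Proof.
move=> hG [[/topological_group_axioms hGc _] morph _ emb dens] powGc O [c Oc] oO.
have [V oV VO] := emb O oO.
have : [set: Gc] (iG c) by [].
rewrite -powGc => -[d dn].
have Wd : nbhs d [set d' | V (tg_pow d' n)].
  apply: (tg_cvgX hGc (m := n) (nbhs_filter d) (@cvg_id _ (nbhs d))); rewrite dn.
  by apply: open_nbhs_nbhs; split; rewrite // -VO in Oc.
have [z [/interior_subset Wz [g _ gz]]] :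
    interior [set d' | V (tg_pow d' n)] `&` range iG !=set0.
  apply: dens; last exact: open_interior.
  by exists d; exact: nbhs_singleton (nbhs_interior Wd).
exists (tg_pow g n); split; last by exists g.
by rewrite -VO /= (tg_morphX hG hGc morph) gz.
Qed.

Section PostComposition.
Variables (X : topologicalType) (K1 K2 : tgData) (th : K1 -> K2) (cth : continuous th).

Definition Cp_map (c : Cp X K1) : Cp X K2 :=
  mkCp (fun x => continuous_comp (Cp_continuous c x) (@cth (Cp_val c x))).

Lemma Cp_map_continuous : continuous Cp_map.
Proof.
move=> c; apply/(@Cp_cvgP X K2 _ _ Cp_map _ (nbhs_filter c)) => x.
exact: (continuous_cvg _ (@cth _) (proj1 (@Cp_cvgP X K1 _ _ id _ (nbhs_filter c)) cvg_id x)).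
Qed.

Lemma Cp_map_morphism (hK1 : topgroup_axioms K1) (hK2 : topgroup_axioms K2) :
  tg_morphism th -> tg_morphism (Cp_map : Cp_tg hK1 X -> Cp_tg hK2 X).
Proof. by move=> hth c d; apply: Cp_ext => x; exact: hth. Qed.

End PostComposition.

Section ProductValued.
Variables (G H : tgData) (hG : topgroup_axioms G) (hH : topgroup_axioms H).
Local Notation K := (prod_tg G H).
Local Notation hK := (prod_topgroup hG hH).

Definition G_valued (T : Type) (f : T -> K) : Prop := forall t, (f t).2 = tg_one.

Lemma continuous_fst : continuous (fun p : K => p.1).
Proof. by move=> p; exact: (cvg_fst_comp (@cvg_id _ (nbhs p))). Qed.
Lemma continuous_snd : continuous (fun p : K => p.2).
Proof. by move=> p; exact: (cvg_snd_comp (@cvg_id _ (nbhs p))). Qed.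
Lemma continuous_inl : continuous (fun g : G => ((g, tg_one) : K)).
Proof. by move=> g; apply: cvg_pair; [exact: cvg_id | exact: cvg_cst]. Qed.
Lemma continuous_inr : continuous (fun h : H => ((tg_one, h) : K)).
Proof. by move=> h; apply: cvg_pair; [exact: cvg_cst | exact: cvg_id]. Qed.

Section OnSpace.
Variable X : topologicalType.

Definition Cp_fst := Cp_map (X := X) continuous_fst.
Definition Cp_snd := Cp_map (X := X) continuous_snd.
Definition Cp_inl := Cp_map (X := X) continuous_inl.
Definition Cp_inr := Cp_map (X := X) continuous_inr.

Lemma Cp_fst_morphism : tg_morphism (Cp_fst : Cp_tg hK X -> Cp_tg hG X).
Proof. exact: Cp_map_morphism. Qed.
Lemma Cp_snd_morphism : tg_morphism (Cp_snd : Cp_tg hK X -> Cp_tg hH X).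
Proof. exact: Cp_map_morphism. Qed.
Lemma Cp_inl_morphism : tg_morphism (Cp_inl : Cp_tg hG X -> Cp_tg hK X).
Proof. by apply: Cp_map_morphism => g g' /=; rewrite tg_mul1g. Qed.
Lemma Cp_inr_morphism : tg_morphism (Cp_inr : Cp_tg hH X -> Cp_tg hK X).
Proof. by apply: Cp_map_morphism => h h' /=; rewrite tg_mul1g. Qed.

Lemma Cp_inlK : cancel Cp_inl Cp_fst.
Proof. by move=> f; apply: Cp_ext. Qed.
Lemma Cp_inrK : cancel Cp_inr Cp_snd.
Proof. by move=> f; apply: Cp_ext. Qed.

Lemma G_valued_inl (f : Cp X G) : G_valued (Cp_val (Cp_inl f)).
Proof. by []. Qed.

Lemma G_valued_fstK (c : Cp X K) : G_valued (Cp_val c) -> Cp_inl (Cp_fst c) = c.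
Proof.
move=> Gc; apply: Cp_ext => x; change (((Cp_val c x).1, tg_one) = Cp_val c x).
by case: (Cp_val c x) (Gc x) => a b /= ->.
Qed.

Lemma Cp_snd_G_valued (c : Cp X K) : G_valued (Cp_val c) -> Cp_snd c = Cp_one H X.
Proof. by move=> Gc; apply: Cp_ext => x; exact: Gc. Qed.

Lemma Cp_prod_decomposition (c : Cp X K) :
  c = tg_mul (Cp_inl (Cp_fst c) : Cp_tg hK X) (Cp_inr (Cp_snd c)).
Proof.
apply: Cp_ext => x.
change (Cp_val c x = (tg_mul (Cp_val c x).1 tg_one, tg_mul tg_one (Cp_val c x).2)).
by rewrite (tg_mulg1 hG) (tg_mul1g hH); case: (Cp_val c x).
Qed.

End OnSpace.

Lemma Cp_snd_morphism_inr (Z W : topologicalType) (Theta : Cp Z K -> Cp W K) :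
  tg_morphism (Theta : Cp_tg hK Z -> Cp_tg hK W) ->
  (forall c, G_valued (Cp_val c) -> G_valued (Cp_val (Theta c))) ->
  forall c, Cp_snd (Theta c) = Cp_snd (Theta (Cp_inr (Cp_snd c))).
Proof.
move=> mTheta GTheta c.
rewrite {1}(Cp_prod_decomposition c) mTheta Cp_snd_morphism.
rewrite Cp_snd_G_valued; first exact: (tg_mul1g (Cp_topgroup hH W)).
exact: GTheta (G_valued_inl _).
Qed.

Lemma Cp_eval_snd_continuous (Z W : topologicalType) (Theta : Cp Z K -> Cp W K) w :
  continuous Theta -> continuous (fun c => (Cp_val (Theta c) w).2).
Proof.
move=> cTheta c; apply: cvg_snd_comp.
exact: (proj1 (@Cp_cvgP W K _ _ Theta _ (nbhs_filter c)) (cTheta c) w).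
Qed.

Lemma Cp_eval_snd_morphism (Z W : topologicalType) (Theta : Cp Z K -> Cp W K) w :
  tg_morphism (Theta : Cp_tg hK Z -> Cp_tg hK W) ->
  tg_morphism ((fun c => (Cp_val (Theta c) w).2) : Cp_tg hK Z -> H).
Proof. by move=> mTheta c d; rewrite mTheta. Qed.

Section Factors.
Variables (X Y : topologicalType) (Phi : Cp X K -> Cp Y K) (Psi : Cp Y K -> Cp X K).
Hypotheses (PhiK : cancel Phi Psi) (PsiK : cancel Psi Phi).
Hypotheses (mPhi : tg_morphism (Phi : Cp_tg hK X -> Cp_tg hK Y))
           (mPsi : tg_morphism (Psi : Cp_tg hK Y -> Cp_tg hK X)).
Hypotheses (cPhi : continuous Phi) (cPsi : continuous Psi).
Hypotheses (GPhi : forall c, G_valued (Cp_val c) -> G_valued (Cp_val (Phi c)))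
           (GPsi : forall c, G_valued (Cp_val c) -> G_valued (Cp_val (Psi c))).

Lemma K_equivalent_fst_factor : K_equivalent G X Y.
Proof.
exists (fun f => Cp_fst (Phi (Cp_inl f))), (fun g => Cp_fst (Psi (Cp_inl g))); split.
- by move=> f; rewrite G_valued_fstK ?PhiK ?Cp_inlK //; exact: GPhi.
- by move=> g; rewrite G_valued_fstK ?PsiK ?Cp_inlK //; exact: GPsi.
- apply/(Cp_homP hG) => f g.
  by rewrite Cp_inl_morphism mPhi Cp_fst_morphism.
- move=> f; apply: continuous_comp; last exact: Cp_map_continuous.
  by apply: continuous_comp; [exact: Cp_map_continuous | exact: cPhi].
- move=> g; apply: continuous_comp; last exact: Cp_map_continuous.
  by apply: continuous_comp; [exact: Cp_map_continuous | exact: cPsi].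
Qed.

Lemma K_equivalent_snd_factor : K_equivalent H X Y.
Proof.
exists (fun f => Cp_snd (Phi (Cp_inr f))), (fun g => Cp_snd (Psi (Cp_inr g))); split.
- by move=> f; rewrite -Cp_snd_morphism_inr // PhiK Cp_inrK.
- by move=> g; rewrite -Cp_snd_morphism_inr // PsiK Cp_inrK.
- apply/(Cp_homP hH) => f g.
  by rewrite Cp_inr_morphism mPhi Cp_snd_morphism.
- move=> f; apply: continuous_comp; last exact: Cp_map_continuous.
  by apply: continuous_comp; [exact: Cp_map_continuous | exact: cPhi].
- move=> g; apply: continuous_comp; last exact: Cp_map_continuous.
  by apply: continuous_comp; [exact: Cp_map_continuous | exact: cPsi].
Qed.

End Factors.
End ProductValued.
Arguments Cp_fst {G H X}.
Arguments Cp_snd {G H X}.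
Arguments Cp_inl {G H X}.
Arguments Cp_inr {G H X}.

Section TrivialOnGValued.
Variables (G H : tgData) (hG : topgroup_axioms G) (hH : topgroup_axioms H).
Local Notation K := (prod_tg G H).
Local Notation hK := (prod_topgroup hG hH).

Lemma dense_G_valued_approx (D : set G) (W : set K) (k : K) :
  dense D -> open W -> W k -> k.2 = tg_one -> exists2 d, D d & W (d, tg_one).
Proof.
move=> dD oW Wk k2.
have oO : open [set g | W (g, tg_one)] by apply: open_comp => // g _; exact: continuous_inl.
have Ok : [set g | W (g, tg_one)] k.1 by rewrite /= -k2; case: k Wk {k2}.
by have [d [Wd Dd]] := dD _ (ex_intro _ _ Ok) oO; exists d.
Qed.

Variables (X : topologicalType) (phi : Cp X K -> H).
Hypotheses (cphi : continuous phi) (mphi : tg_morphism (phi : Cp_tg hK X -> H)).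
Hypotheses (T1X : accessible_space X) (regX : Gss_regular G X) (sepH : hausdorff_space H).

Lemma G_valued_morphism_trivial_powers n :
  dense (@nth_powers G n) -> @nth_powers H n = [set tg_one] ->
  forall a, G_valued (Cp_val a) -> phi a = tg_one.
Proof.
move=> Gn Hn a Ga; apply: sepH => A B nA nB.
exists tg_one; split; last exact: nbhs_singleton nB.
have [xs [W [oW aW]]] := Cp_nbhs_basic (cphi nA).
have /choice[g Wg] : forall x, exists g : G, W x (tg_pow g n, tg_one).
  move=> x; have [oWx Wax] := oW x.
  by have [_ [g <-] Wgn] := dense_G_valued_approx Gn oWx Wax (Ga x); exists g.
have [b bg] := Gss_regular_interpolate hG T1X regX xs g.
have : A (phi (tg_pow (Cp_inl b : Cp_tg hK X) n)).
  by apply: aW => x xxs; rewrite Cp_powE prod_tg_pow /= bg // tg_pow1.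
rewrite (tg_morphX (Cp_topgroup hK X) hH mphi).
suff -> : tg_pow (phi (Cp_inl b)) n = tg_one by [].
by have : [set tg_one] (tg_pow (phi (Cp_inl b)) n) by rewrite -Hn; exists (phi (Cp_inl b)).
Qed.

Lemma Cp_trace_proper (tau : {ptws X -> K}) : G_valued tau -> ProperFilter (Cp_trace tau).
Proof.
move=> Gtau; have FF := Cp_trace_filter tau; split=> // -[M].
rewrite ptws_nbhsE => -[xs [W [oW hM]]] M0.
have [b bt] := Gss_regular_interpolate hG T1X regX xs (fun x => (tau x).1).
apply: (M0 (Cp_inl b)); apply: hM => x xxs.
have [_ Wt] := oW x; change (W x (Cp_val b x, tg_one)).
by rewrite bt // -(Gtau x); case: (tau x) Wt.
Qed.

Lemma G_valued_torsion_trace_cvg (Hc : tgData) (iH : H -> Hc) (tau : {ptws X -> K}) m :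
  is_completion iH -> torsion_free Hc -> G_valued tau -> (0 < m)%N ->
  (forall x, tg_pow (tau x) m = tg_one) -> phi @ Cp_trace tau --> tg_one.
Proof.
move=> cHc tf Gtau m0 taum.
have hKX := Cp_topgroup hK X; have PT := Cp_trace_proper Gtau.
apply: (torsion_free_completion_cvg_one hH cHc tf (fmap_proper_filter phi PT) _ m0).
  apply: (two_sided_cauchy_morphism hKX hH mphi); first exact: cphi.
  exact: Cp_trace_cauchy.
have powm : (fun c => tg_pow (c : Cp_tg hK X) m) @ Cp_trace tau --> Cp_one K X.
  apply/(@Cp_cvgP X K _ _ (fun c => tg_pow (c : Cp_tg hK X) m) _ (Cp_trace_filter tau)) => x.
  have -> : (fun c => Cp_val (tg_pow (c : Cp_tg hK X) m) x) =
            (fun c => tg_pow (Cp_val c x) m) by apply: funext => c; exact: Cp_powE.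
  have := tg_cvgX hK (m := m) (Cp_trace_filter tau) (@Cp_trace_eval X K tau x).
  by rewrite taum.
change ((fun c => tg_pow (phi c) m) @ Cp_trace tau --> tg_one).
rewrite -(tg_morph1 hKX hH mphi).
under eq_fun do rewrite -(tg_morphX hKX hH mphi).
exact: (continuous_cvg _ (@cphi _) powm).
Qed.

Lemma G_valued_morphism_trivial_torsion (Hc : tgData) (iH : H -> Hc) :
  dense (@torsion_part G) -> is_completion iH -> torsion_free Hc ->
  forall a, G_valued (Cp_val a) -> phi a = tg_one.
Proof.
move=> Gt cHc tf a Ga; apply: sepH => A B nA nB.
have [xs [W [oW aW]]] := Cp_nbhs_basic (cphi nA).
have /choice[t ht] : forall x, exists t : G * nat,
    [/\ (0 < t.2)%N, tg_pow t.1 t.2 = tg_one & W x (t.1, tg_one)].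
  move=> x; have [oWx Wax] := oW x.
  by have [g [k [k0 gk]] Wg] := dense_G_valued_approx Gt oWx Wax (Ga x); exists (g, k).
pose tau : {ptws X -> K} := fun x => (if x \in xs then (t x).1 else tg_one, tg_one).
(* [m] is a common order of the values of [tau]. *)
pose m := (\prod_(x <- xs) (t x).2)%N.
have taum x : tg_pow (tau x) m = tg_one.
  rewrite prod_tg_pow /= tg_pow1 //; case: ifP => xxs; last by rewrite tg_pow1.
  have [_ tk _] := ht x.
  by rewrite /m (big_rem x) //= tg_powM // tk tg_pow1.
have m0 : (0 < m)%N by apply: prodn_gt0 => x; case: (ht x).
have Tphi := G_valued_torsion_trace_cvg (tau := tau) cHc tf (fun=> erefl) m0 taum.
have TA : Cp_trace tau (phi @^-1` A).
  exists [set g : {ptws X -> K} | forall x, x \in xs -> W x (g x)]; last exact: aW.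
  apply: ptws_nbhs_finite => x xxs; have [oWx _] := oW x; apply: open_nbhs_nbhs.
  by split=> //; rewrite /tau xxs; case: (ht x).
have PT := Cp_trace_proper (tau := tau) (fun=> erefl).
have [c [Ac Bc]] := @filter_ex _ _ PT _ (filterI TA (Tphi B nB)).
by exists (phi c).
Qed.

Lemma G_valued_morphism_trivial (Gc Hc : tgData) (iG : G -> Gc) (iH : H -> Hc) :
  is_completion iG -> is_completion iH ->
  (dense (@torsion_part G) /\ torsion_free Hc) \/
  (exists n, @nth_powers Gc n = setT /\ @nth_powers H n = [set tg_one]) ->
  forall a, G_valued (Cp_val a) -> phi a = tg_one.
Proof.
move=> cGc cHc [[Gt tf]|[n [Gcn Hn]]].
- exact: G_valued_morphism_trivial_torsion Gt cHc tf.
- exact: G_valued_morphism_trivial_powers (completion_dense_powers hG cGc Gcn) Hn.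
Qed.

End TrivialOnGValued.

Lemma morphism_preserves_G_valued (G H Gc Hc : tgData) (iG : G -> Gc) (iH : H -> Hc)
    (hG : topgroup_axioms G) (hH : topgroup_axioms H) (X Y : topologicalType)
    (Phi : Cp X (prod_tg G H) -> Cp Y (prod_tg G H)) :
  is_completion iG -> is_completion iH ->
  (dense (@torsion_part G) /\ torsion_free Hc) \/
  (exists n, @nth_powers Gc n = setT /\ @nth_powers H n = [set tg_one]) ->
  hausdorff_space H -> accessible_space X -> Gss_regular G X -> continuous Phi ->
  tg_morphism (Phi : Cp_tg (prod_topgroup hG hH) X -> Cp_tg (prod_topgroup hG hH) Y) ->
  forall c, G_valued (Cp_val c) -> G_valued (Cp_val (Phi c)).
Proof.
move=> cGc cHc hyp sepH T1X regX cPhi mPhi c Gvc y.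
exact: (@G_valued_morphism_trivial G H hG hH X _ (Cp_eval_snd_continuous (w := y) cPhi)
  (Cp_eval_snd_morphism y mPhi) T1X regX sepH _ _ _ _ cGc cHc hyp _ Gvc).
Qed.

Theorem theorem3p3
  (G H : tgData) (hG : topological_group G) (hH : topological_group H)
  (Gc : tgData) (iG : G -> Gc) (hGc : is_completion iG)
  (Hc : tgData) (iH : H -> Hc) (hHc : is_completion iH)
  (X Y : topologicalType)
  (tX : tychonoff_space X) (tY : tychonoff_space Y)
  (x0 : X) (y0 : Y) :
  ((dense (@torsion_part G) /\ torsion_free Hc) \/
   (exists n : nat, @nth_powers Gc n = setT /\ @nth_powers H n = [set tg_one])) ->
  Gss_regular G X -> Gss_regular G Y ->
  K_equivalent (prod_tg G H) X Y ->
  K_equivalent G X Y /\ K_equivalent H X Y.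
Proof.
move=> hyp regX regY [Phi [Psi [PhiK PsiK hPhi cPhi cPsi]]].
have [hGa hHa] := (topological_group_axioms hG, topological_group_axioms hH).
have sepH : hausdorff_space H by case: hH.
have [[T1X _] [T1Y _]] := (tX, tY).
pose hK := prod_topgroup hGa hHa.
have mPhi := (Cp_homP hK Phi).1 hPhi.
have mPsi := tg_morphism_inverse (K1 := Cp_tg hK X) (K2 := Cp_tg hK Y) PhiK PsiK mPhi.
have GPhi := morphism_preserves_G_valued hGc hHc hyp sepH T1X regX cPhi mPhi.
have GPsi := morphism_preserves_G_valued hGc hHc hyp sepH T1Y regY cPsi mPsi.
split; first exact: K_equivalent_fst_factor PhiK PsiK mPhi cPhi cPsi GPhi GPsi.
exact: K_equivalent_snd_factor PhiK PsiK mPhi mPsi cPhi cPsi GPhi GPsi.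
Qed.
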